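(* Fix a constant $\Delta$. Let $\mathcal{G}$ be one of the following graph families: (i) all graphs of maximum degree at most $\Delta$; (ii) all trees of maximum degree at most $\Delta$; (iii) all cycles (in which case $\Delta=2$). Let $d(n)=n$ if $\Delta\le 2$ and $d(n)=\log n$ otherwise. Then there is no LCL problem $\Pi$ defined on $\mathcal{G}$ whose mending radius is between $\omega(1)$ and $o(d(n))$; that is, if $\Pi$ is $T$-mendable on $\mathcal{G}$ for some function $T$ with $T(n)=o(d(n))$, then $\Pi$ is $T'$-mendable on $\mathcal{G}$ for some constant function $T'$.
   Context: A locally verifiable problem $\Pi$ on a graph family $\mathcal{G}$ is given by a set $\Sigma$ of input labels, a set $\Gamma$ of output labels and a verifier $\psi$ with verification radius $r\in\mathbb{N}$: for a graph $G=(V,E)\in\mathcal{G}$ with input labeling $\sigma:V\to\Sigma$, an output labeling $\lambda:V\to\Gamma$ and a node $v$, $\psi(G,\lambda,v)\in\{\text{happy},\text{unhappy}\}$ depends only on the radius-$r$ neighborhood of $v$ (structure, inputs and outputs, up to isomorphism). $\lambda$ is a solution if $\psi$ is happy at every node. $\Pi$ is an LCL problem if $\Sigma,\Gamma$ are finite and all graphs in $\mathcal{G}$ have maximum degree bounded by a constant. Partial labelings are maps $\lambda:V\to\Gamma\cup\{\bot\}$; the relaxed verifier $\psi^*$ is happy at $v$ if some node within distance $r$ of $v$ has label $\bot$, and otherwise $\psi^*(G,\lambda,v)=\psi(G,\lambda',v)$ for any $\lambda':V\to\Gamma$ agreeing with $\lambda$ on the radius-$r$ neighborhood of $v$; $\psi^*$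 accepts $\lambda$ if it is happy at all nodes. Given $\lambda$ accepted by $\psi^*$ and a node $v$, a $t$-mend of $\lambda$ at $v$ is a partial labeling $\mu$ such that $\psi^*$ accepts $\mu$, $\mu(v)\neq\bot$, $\mu(u)=\bot$ implies $\lambda(u)=\bot$, and $\mu(u)\neq\lambda(u)$ implies $u$ is within distance $t$ of $v$. A verifier $\psi$ is $T$-mendable ($T:\mathbb{N}\to\mathbb{N}$) if for every $G\in\mathcal{G}$ with $n$ nodes, every partial labeling $\lambda$ accepted by $\psi^*$ and every node $v$, a $T(n)$-mend of $\lambda$ at $v$ exists. $\Pi$ is $T$-mendable if for some $r$ there is a radius-$r$ verifier for $\Pi$ (accepting exactly the solutions of $\Pi$) that is $T$-mendable. *)

From mathcomp Require Import all_boot.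
Set Implicit Arguments. Unset Strict Implicit. Unset Printing Implicit Defensive.

Definition simple_graph (n : nat) (adj : rel 'I_n) : Prop :=
  symmetric adj /\ irreflexive adj.

Definition deg (n : nat) (adj : rel 'I_n) (v : 'I_n) : nat := #|[pred u | adj v u]|.

Definition max_deg_le (D : nat) (n : nat) (adj : rel 'I_n) : Prop :=
  forall v, deg adj v <= D.

Definition connected (n : nat) (adj : rel 'I_n) : Prop :=
  forall u v : 'I_n, connect adj u v.

Definition acyclic (n : nat) (adj : rel 'I_n) : Prop :=
  forall s : seq 'I_n, 2 < size s -> uniq s -> ~~ cycle adj s.

Fixpoint ball (n : nat) (adj : rel 'I_n) (v : 'I_n) (t : nat) : 'I_n -> bool :=
  match t with
  | 0 => fun u => u == v
  | t'.+1 => fun u => ball adj v t' u || [exists w, ball adj v t' w && adj w u]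
  end.

Definition graph_family := forall n : nat, rel 'I_n -> Prop.

Inductive family_kind := BoundedDegree | BoundedDegreeTrees | Cycles.

Definition graph_class (k : family_kind) (D : nat) : graph_family :=
  fun n adj =>
    match k with
    | BoundedDegree => simple_graph adj /\ max_deg_le D adj
    | BoundedDegreeTrees =>
        simple_graph adj /\ max_deg_le D adj /\ connected adj /\ acyclic adj
    | Cycles =>
        simple_graph adj /\ 3 <= n /\ connected adj /\ (forall v, deg adj v = 2)
    end.

(* A problem with input labels S and output labels G is given by its set of
   solutions: sol n adj sigma lambda. *)
Definition problem (S G : finType) :=
  forall n : nat, rel 'I_n -> ('I_n -> S) -> ('I_n -> G) -> Prop.

Definition verifier (S G : finType) :=
  forall n : nat, rel 'I_n -> ('I_n -> S) -> ('I_n -> G) -> 'I_n -> bool.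

(* (adj1,s1,l1,v1) and (adj2,s2,l2,v2) have isomorphic radius-r neighbourhoods
   (induced subgraph on the ball, with input and output labels, rooted). *)
Definition ball_iso (S G : finType) (r : nat)
    (n1 : nat) (adj1 : rel 'I_n1) (s1 : 'I_n1 -> S) (l1 : 'I_n1 -> G) (v1 : 'I_n1)
    (n2 : nat) (adj2 : rel 'I_n2) (s2 : 'I_n2 -> S) (l2 : 'I_n2 -> G) (v2 : 'I_n2)
    : Prop :=
  exists (f : 'I_n1 -> 'I_n2) (g : 'I_n2 -> 'I_n1),
    [/\ f v1 = v2,
        (forall u, ball adj1 v1 r u -> ball adj2 v2 r (f u) /\ g (f u) = u),
        (forall w, ball adj2 v2 r w -> ball adj1 v1 r (g w) /\ f (g w) = w),
        (forall u u', ball adj1 v1 r u -> ball adj1 v1 r u' ->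
                      adj2 (f u) (f u') = adj1 u u')
      & (forall u, ball adj1 v1 r u -> s2 (f u) = s1 u /\ l2 (f u) = l1 u)].

Definition is_local (S G : finType) (F : graph_family) (r : nat) (psi : verifier S G)
  : Prop :=
  forall n1 (adj1 : rel 'I_n1) s1 l1 v1 n2 (adj2 : rel 'I_n2) s2 l2 v2,
    F n1 adj1 -> F n2 adj2 ->
    ball_iso r adj1 s1 l1 v1 adj2 s2 l2 v2 ->
    psi n1 adj1 s1 l1 v1 = psi n2 adj2 s2 l2 v2.

Definition verifies (S G : finType) (F : graph_family) (psi : verifier S G)
    (Pi : problem S G) : Prop :=
  forall n (adj : rel 'I_n) s l, F n adj ->
    (Pi n adj s l <-> forall v, psi n adj s l v).

(* Pi is an LCL problem on F (S, G finite by typing; bounded degree is part of F) *)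
Definition is_LCL (S G : finType) (F : graph_family) (Pi : problem S G) : Prop :=
  exists r (psi : verifier S G), is_local F r psi /\ verifies F psi Pi.

(* Partial labelings: None stands for bottom. Relaxed verifier psi^*. *)
Definition relaxed_happy (S G : finType) (r : nat) (psi : verifier S G)
    n (adj : rel 'I_n) (s : 'I_n -> S) (l : 'I_n -> option G) (v : 'I_n) : Prop :=
  (exists u, ball adj v r u /\ l u = None) \/
  (forall l' : 'I_n -> G, (forall u, ball adj v r u -> l u = Some (l' u)) ->
     psi n adj s l' v).

Definition relaxed_accepts (S G : finType) (r : nat) (psi : verifier S G)
    n (adj : rel 'I_n) (s : 'I_n -> S) (l : 'I_n -> option G) : Prop :=
  forall v, relaxed_happy r psi adj s l v.

Definition is_mend (S G : finType) (r : nat) (psi : verifier S G)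
    n (adj : rel 'I_n) (s : 'I_n -> S) (l mu : 'I_n -> option G) (v : 'I_n) (t : nat)
    : Prop :=
  [/\ relaxed_accepts r psi adj s mu,
      mu v <> None,
      (forall u, mu u = None -> l u = None)
    & (forall u, mu u <> l u -> ball adj v t u)].

Definition verifier_mendable (S G : finType) (F : graph_family) (r : nat)
    (psi : verifier S G) (T : nat -> nat) : Prop :=
  forall n (adj : rel 'I_n) (s : 'I_n -> S) (l : 'I_n -> option G) (v : 'I_n),
    F n adj -> relaxed_accepts r psi adj s l ->
    exists mu, is_mend r psi adj s l mu v (T n).

Definition mendable (S G : finType) (F : graph_family) (Pi : problem S G)
    (T : nat -> nat) : Prop :=
  exists r (psi : verifier S G),
    [/\ is_local F r psi, verifies F psi Pi & verifier_mendable F r psi T].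

Definition dfun (D : nat) (n : nat) : nat := if D <= 2 then n else trunc_log 2 n.

Definition little_o (T d : nat -> nat) : Prop :=
  forall c, 0 < c -> exists N, forall n, N <= n -> c * T n <= d n.

From mathcomp Require Import all_boot.
From mathcomp Require Import zify.
Set Implicit Arguments. Unset Strict Implicit. Unset Printing Implicit Defensive.

(** Let r be the verification radius of a T-mendable verifier. As T = o(d), some n0 is so large
    that a ball of radius K = T(n0) + 3r has at most n0 nodes (balls grow at most exponentially,
    and only linearly when the degree is at most 2). In a larger graph G of the family, the K-ball
    around a node v then reappears, up to isomorphism, as the K-ball around a node of an n0-node
    graph H of the same family: the subgraph induced by a (connected) superset of the ball for
    bounded-degree graphs and trees, the n0-cycle for cycles. Copy the partial labeling of G onto
    the (T(n0) + 2r)-ball of H, leave it undefined elsewhere, mend it in H within radius T(n0) and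
    copy the result back: every node whose radius-r view changes sees the same thing in G and H.
    Hence mending radius max_(m <= n0) T(m) suffices in every graph. *)

Lemma ball0 n (adj : rel 'I_n) v u : ball adj v 0 u = (u == v).
Proof. by []. Qed.

Lemma ballS n (adj : rel 'I_n) v t u :
  ball adj v t.+1 u = ball adj v t u || [exists w, ball adj v t w && adj w u].
Proof. by []. Qed.

Section Balls.
Variables (n : nat) (adj : rel 'I_n).

Lemma ball_refl v t : ball adj v t v.
Proof. by elim: t => [|t IH]; rewrite ?ball0 ?ballS ?IH. Qed.

Lemma ball_le v a b u : a <= b -> ball adj v a u -> ball adj v b u.
Proof. by move/subnK <-; elim: (b - a) => [|k IH] // Hu; rewrite addSn ballS IH. Qed.

Lemma ball_step v t w u : ball adj v t w -> adj w u -> ball adj v t.+1 u.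
Proof. by move=> Hw Hwu; rewrite ballS; apply/orP; right; apply/existsP; exists w; rewrite Hw. Qed.

Lemma ball_trans v a x b y : ball adj v a x -> ball adj x b y -> ball adj v (a + b) y.
Proof.
move=> Hx; elim: b y => [|b IH] y; first by rewrite ball0 addn0 => /eqP ->.
rewrite addnS ballS => /orP [/IH Hy | /existsP [w /andP [Hw Hwy]]].
  exact: ball_le Hy.
exact: ball_step (IH _ Hw) Hwy.
Qed.

Lemma ball_sym : symmetric adj -> forall x t y, ball adj x t y -> ball adj y t x.
Proof.
move=> sym x t; elim: t x => [|t IH] x y; first by rewrite !ball0 eq_sym.
rewrite ballS => /orP [/IH Hy | /existsP [w /andP [Hw Hwy]]]; first exact: ball_le Hy.
have Hyw : ball adj y 1 w by apply: ball_step (ball_refl _ _) _; rewrite sym.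
by rewrite -add1n; apply: ball_trans Hyw (IH _ _ Hw).
Qed.

End Balls.

Lemma ball_image n1 n2 (adj1 : rel 'I_n1) (adj2 : rel 'I_n2) (f : 'I_n1 -> 'I_n2) v K :
    (forall u u', ball adj1 v K u -> ball adj1 v K u' -> adj1 u u' -> adj2 (f u) (f u')) ->
  forall a x j y, a + j <= K -> ball adj1 v a x -> ball adj1 x j y -> ball adj2 (f x) j (f y).
Proof.
move=> hom a x j y; elim: j y => [|j IH] y le_K Hx; first by rewrite !ball0 => /eqP ->.
rewrite ballS => /orP [Hy | /existsP [w /andP [Hw Hwy]]].
  by apply: ball_le (IH _ _ Hx Hy); lia.
apply: ball_step (IH _ _ Hx Hw) _; first lia.
have Hwy' := ball_step Hw Hwy.
by apply: hom Hwy; apply: ball_le (ball_trans Hx _); [| exact: Hw | | exact: Hwy']; lia.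
Qed.

Lemma ball_image_center n1 n2 (adj1 : rel 'I_n1) (adj2 : rel 'I_n2) (f : 'I_n1 -> 'I_n2) v K :
    (forall u u', ball adj1 v K u -> ball adj1 v K u' -> adj1 u u' -> adj2 (f u) (f u')) ->
  forall j u, j <= K -> ball adj1 v j u -> ball adj2 (f v) j (f u).
Proof. by move=> hom j u le_jK; apply: (ball_image (a := 0) hom le_jK (ball_refl _ _ _)). Qed.

Definition local_iso (K : nat) n1 (adj1 : rel 'I_n1) (v1 : 'I_n1)
    n2 (adj2 : rel 'I_n2) (v2 : 'I_n2) (f : 'I_n1 -> 'I_n2) (g : 'I_n2 -> 'I_n1) : Prop :=
  [/\ f v1 = v2,
      (forall u, ball adj1 v1 K u -> ball adj2 v2 K (f u) /\ g (f u) = u),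
      (forall w, ball adj2 v2 K w -> ball adj1 v1 K (g w) /\ f (g w) = w)
    & (forall u u', ball adj1 v1 K u -> ball adj1 v1 K u' -> adj2 (f u) (f u') = adj1 u u')].

Section LocalIso.
Variables (n1 n2 : nat) (adj1 : rel 'I_n1) (adj2 : rel 'I_n2).
Variables (f : 'I_n1 -> 'I_n2) (g : 'I_n2 -> 'I_n1).

Lemma local_iso_id K v : local_iso K adj1 v adj1 v id id.
Proof. by split. Qed.

Lemma local_iso_sym K v1 v2 :
  local_iso K adj1 v1 adj2 v2 f g -> local_iso K adj2 v2 adj1 v1 g f.
Proof.
move=> [fv1 hf hg hadj]; have gv2 : g v2 = v1 by rewrite -fv1; case: (hf v1 (ball_refl _ _ _)).
split=> // w w' Hw Hw'; have [Hgw fgw] := hg w Hw; have [Hgw' fgw'] := hg w' Hw'.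
by rewrite -(hadj _ _ Hgw Hgw') fgw fgw'.
Qed.

Lemma local_iso_restrict K v1 v2 a j x :
  local_iso K adj1 v1 adj2 v2 f g -> a + j <= K -> ball adj1 v1 a x ->
  local_iso j adj1 x adj2 (f x) f g.
Proof.
move=> iso le_K Hx; have [fv1 hf hg hadj] := iso; have [_ _ _ hadj'] := local_iso_sym iso.
have inK y : ball adj1 x j y -> ball adj1 v1 K y.
  by move=> Hy; apply: ball_le (ball_trans Hx Hy).
have hom1 u u' : ball adj1 v1 K u -> ball adj1 v1 K u' -> adj1 u u' -> adj2 (f u) (f u').
  by move=> Hu Hu'; rewrite hadj.
have hom2 w w' : ball adj2 v2 K w -> ball adj2 v2 K w' -> adj2 w w' -> adj1 (g w) (g w').
  by move=> Hw Hw'; rewrite hadj'.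
have Hfx : ball adj2 v2 a (f x).
  by rewrite -fv1; apply: (ball_image_center hom1 _ Hx); lia.
have gfx : g (f x) = x by case: (hf x); first by apply: ball_le Hx; lia.
split=> //.
- move=> u Hu; split; last by case: (hf u (inK u Hu)).
  exact: (ball_image hom1 le_K Hx Hu).
- move=> w Hw; have Hw2 : ball adj2 v2 K w by apply: ball_le (ball_trans Hfx Hw).
  split; last by case: (hg w Hw2).
  by rewrite -gfx; apply: (ball_image hom2 le_K Hfx Hw).
- by move=> u u' Hu Hu'; apply: hadj; apply: inK.
Qed.

Lemma local_iso_le K j v1 v2 :
  local_iso K adj1 v1 adj2 v2 f g -> j <= K -> local_iso j adj1 v1 adj2 v2 f g.
Proof.
move=> iso le_jK; have [fv1 _ _ _] := iso.
by rewrite -fv1; apply: (local_iso_restrict (a := 0) iso le_jK (ball_refl _ _ _)).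
Qed.

Lemma local_iso_intro K v :
  (forall u u', ball adj1 v K u -> ball adj1 v K u' -> adj1 u u' -> adj2 (f u) (f u')) ->
  (forall w w', ball adj2 (f v) K w -> ball adj2 (f v) K w' -> adj2 w w' -> adj1 (g w) (g w')) ->
  (forall u, ball adj1 v K u -> g (f u) = u) ->
  (forall w, ball adj2 (f v) K w -> f (g w) = w) ->
  local_iso K adj1 v adj2 (f v) f g.
Proof.
move=> hom1 hom2 gf fg; have gfv : g (f v) = v by apply: gf; apply: ball_refl.
have ball_f u : ball adj1 v K u -> ball adj2 (f v) K (f u).
  exact: (ball_image_center hom1 (leqnn K)).
have ball_g w : ball adj2 (f v) K w -> ball adj1 v K (g w).
  by rewrite -{2}gfv; exact: (ball_image_center hom2 (leqnn K)).
split=> // [u Hu | w Hw | u u' Hu Hu']; [by rewrite ball_f ?gf | by rewrite ball_g ?fg |].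
by apply/idP/idP; [rewrite -{2}(gf u Hu) -{2}(gf u' Hu'); apply: hom2; apply: ball_f | apply: hom1].
Qed.

Lemma iso_local_iso K v : cancel f g -> cancel g f ->
  (forall u u', adj2 (f u) (f u') = adj1 u u') -> local_iso K adj1 v adj2 (f v) f g.
Proof.
move=> fK gK hadj; apply: local_iso_intro => [u u' _ _ | w w' _ _ | u _ | w _] //.
- by rewrite hadj.
- by rewrite -hadj !gK.
Qed.

End LocalIso.

Lemma local_iso_comp K n1 n2 n3 (adj1 : rel 'I_n1) (adj2 : rel 'I_n2) (adj3 : rel 'I_n3)
    v1 v2 v3 f g f' g' :
  local_iso K adj1 v1 adj2 v2 f g -> local_iso K adj2 v2 adj3 v3 f' g' ->
  local_iso K adj1 v1 adj3 v3 (f' \o f) (g \o g').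
Proof.
move=> [fv1 hf hg hadj] [fv2 hf' hg' hadj']; split=> [| u Hu | w Hw | u u' Hu Hu'] /=.
- by rewrite fv1.
- by have [Hfu gfu] := hf u Hu; have [-> ->] := hf' _ Hfu.
- by have [Hgw fgw] := hg' w Hw; have [-> ->] := hg _ Hgw.
- by rewrite hadj' ?hadj //; [have [] := hf u Hu | have [] := hf u' Hu'].
Qed.

Section Mending.
Variables (S G : finType) (F : graph_family) (r : nat) (psi : verifier S G).
Hypothesis loc : is_local F r psi.

Lemma relaxed_happy_transfer n1 (adj1 : rel 'I_n1) s1 l1 x1 n2 (adj2 : rel 'I_n2) s2 l2 x2 f g :
  F adj1 -> F adj2 -> local_iso r adj1 x1 adj2 x2 f g ->
  (forall u, ball adj1 x1 r u -> s2 (f u) = s1 u /\ l2 (f u) = l1 u) ->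
  relaxed_happy r psi adj1 s1 l1 x1 -> relaxed_happy r psi adj2 s2 l2 x2.
Proof.
move=> F1 F2 iso labels; have [fx1 hf hg hadj] := iso.
case=> [[u [Hu l1u]] | happy1].
  by left; exists (f u); have [-> _] := hf u Hu; have [_ ->] := labels u Hu.
right=> l' Hl'.
have iso' : ball_iso r adj1 s1 (l' \o f) x1 adj2 s2 l' x2.
  by exists f, g; split=> // u Hu; have [-> _] := labels u Hu.
rewrite -(loc F1 F2 iso'); apply: happy1 => u Hu.
by have [_ <-] := labels u Hu; apply: Hl'; have [] := hf u Hu.
Qed.

Section Pullback.
Variables (n n' : nat) (adj : rel 'I_n) (adjH : rel 'I_n') (s : 'I_n -> S).
Variables (v : 'I_n) (w : 'I_n') (f : 'I_n -> 'I_n') (g : 'I_n' -> 'I_n).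
Hypotheses (FG : F adj) (FH : F adjH).

Lemma relaxed_accepts_restrict K L (l : 'I_n -> option G) :
  local_iso K adj v adjH w f g -> L + r <= K -> relaxed_accepts r psi adj s l ->
  relaxed_accepts r psi adjH (s \o g) (fun j => if ball adjH w L j then l (g j) else None).
Proof.
move=> iso le_K acc i; set lH := fun j => _.
case: (boolP [exists u, ball adjH i r u && (lH u == None)]).
  by case/existsP=> u /andP [Hu /eqP lHu]; left; exists u.
move/existsPn=> defined.
have {}defined u : ball adjH i r u -> ball adjH w L u /\ lH u = l (g u).
  by move=> Hu; have := defined u; rewrite Hu /lH; case: ifP.
have [HiL _] := defined i (ball_refl _ _ _).
have [_ /(_ i HiL) [Hgi fgi] _ _] :=
  local_iso_le (local_iso_sym iso) (leq_trans (leq_addr r L) le_K).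
have iso_i : local_iso r adj (g i) adjH i f g.
  by rewrite -{2}fgi; apply: local_iso_restrict iso le_K Hgi.
apply: (relaxed_happy_transfer FG FH iso_i _ (acc (g i))) => u Hu.
have [_ /(_ u Hu) [Hfu gfu] _ _] := iso_i.
by rewrite /= gfu; split=> //; have [_ ->] := defined _ Hfu; rewrite gfu.
Qed.

Lemma is_mend_pullback t (l : 'I_n -> option G) (muH : 'I_n' -> option G) :
  symmetric adj -> local_iso (t + 3 * r) adj v adjH w f g -> relaxed_accepts r psi adj s l ->
  is_mend r psi adjH (s \o g)
    (fun j => if ball adjH w (t + 2 * r) j then l (g j) else None) muH w t ->
  is_mend r psi adj s l (fun y => if ball adj v t y then muH (f y) else l y) v t.
Proof.
move=> sym iso acc.
set lH := fun j => if ball adjH w _ j then _ else _.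
set mu := fun y => if ball adj v t y then _ else _.
case=> accH muHw muH_none muH_far.
have [fv _ _ _] := iso.
have le2 : t + 2 * r <= t + 3 * r by lia.
have [_ iso2 _ _] := local_iso_le iso le2.
have lH_f u : ball adj v (t + 2 * r) u -> lH (f u) = l u.
  by move=> Hu; have [Hfu gfu] := iso2 u Hu; rewrite /lH Hfu gfu.
have mu_f u : ball adj v (t + 2 * r) u -> mu u = muH (f u).
  move=> Hu; rewrite /mu; case: ifP => // Hnt.
  rewrite -(lH_f u Hu); case: (muH (f u) =P lH (f u)) => // /muH_far Hfar.
  have [_ /(_ _ Hfar) [] ] := local_iso_le (local_iso_sym iso) (leq_addr (3 * r) t).
  by have [_ ->] := iso2 u Hu; rewrite Hnt.
split.
- move=> x; case: (boolP (ball adj v (t + r) x)) => Hx.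
    have le3 : t + r + r <= t + 3 * r by lia.
    have iso_x := local_iso_sym (local_iso_restrict iso le3 Hx).
    apply: (relaxed_happy_transfer FH FG iso_x _ (accH (f x))).
    move=> w' Hw'; have [_ /(_ w' Hw') [Hgw fgw] _ _] := iso_x.
    by split=> //; rewrite mu_f ?fgw //; apply: ball_le (ball_trans Hx Hgw); lia.
  apply: (relaxed_happy_transfer FG FG (local_iso_id _ _ _) _ (acc x)) => u Hu.
  split=> //; rewrite /mu; case: ifP => // Hvu.
  by case/negP: Hx; apply: ball_trans Hvu (ball_sym sym Hu).
- by rewrite /mu ball_refl fv.
- move=> u; rewrite /mu; case: ifP => // Hu /muH_none.
  by rewrite lH_f //; apply: ball_le Hu; lia.
- by move=> u; rewrite /mu; case: ifP.
Qed.

End Pullback.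

Lemma is_mend_le t1 t2 n (adj : rel 'I_n) s l mu v :
  t1 <= t2 -> is_mend r psi adj s l mu v t1 -> is_mend r psi adj s l mu v t2.
Proof. by move=> le_t [acc muv mu_none mu_near]; split=> // u /mu_near; apply: ball_le. Qed.

Lemma mend_transfer t n n' (adj : rel 'I_n) (adjH : rel 'I_n') s l v w f g :
  F adj -> F adjH -> symmetric adj -> local_iso (t + 3 * r) adj v adjH w f g ->
  relaxed_accepts r psi adj s l ->
  (forall lH, relaxed_accepts r psi adjH (s \o g) lH ->
     exists muH, is_mend r psi adjH (s \o g) lH muH w t) ->
  exists mu, is_mend r psi adj s l mu v t.
Proof.
move=> FG FH sym iso acc mendH.
have le_K : t + 2 * r + r <= t + 3 * r by lia.
have [muH HmuH] := mendH _ (relaxed_accepts_restrict FG FH iso le_K acc).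
by eexists; exact: (is_mend_pullback FG FH sym iso acc HmuH).
Qed.

End Mending.

Definition ball_card_bound (D t : nat) : nat := 1 + t * (D * maxn 1 D.-1 ^ t).

Definition sphere n (adj : rel 'I_n) (v : 'I_n) (t : nat) : {set 'I_n} :=
  [set u | ball adj v t.+1 u] :\: [set u | ball adj v t u].

Section BallSize.
Variables (n : nat) (adj : rel 'I_n) (D : nat) (v : 'I_n).
Hypotheses (sym : symmetric adj) (deg_le : max_deg_le D adj).

Let B t := [set u | ball adj v t u].

Let in_B t u : (u \in B t) = ball adj v t u.
Proof. by rewrite inE. Qed.

Let in_sphere t u : (u \in sphere adj v t) = ~~ ball adj v t u && ball adj v t.+1 u.
Proof. by rewrite in_setD !inE. Qed.

Lemma card_sphere0 : #|sphere adj v 0| <= D.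
Proof.
apply: leq_trans (deg_le v); apply: subset_leq_card; apply/subsetP => u.
rewrite in_sphere ballS ball0 inE => /andP [/negPf-> /existsP [w /andP [/eqP-> //]]].
Qed.

Lemma card_sphereS t : #|sphere adj v t.+1| <= #|sphere adj v t| * D.-1.
Proof.
pose N w := [set u | adj w u & u \notin B t.+1].
have cover : sphere adj v t.+1 \subset \bigcup_(w in sphere adj v t) N w.
  apply/subsetP => u; rewrite in_sphere (ballS adj v t.+1).
  case/andP=> Hu /orP [Hu' | /existsP [w /andP [Hw Hwu]]]; first by rewrite Hu' in Hu.
  apply/bigcupP; exists w; last by rewrite inE Hwu in_B.
  by rewrite in_sphere Hw andbT; apply: contra Hu => Hwt; exact: ball_step Hwt Hwu.
have card_N w : w \in sphere adj v t -> #|N w| <= D.-1.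
  rewrite in_sphere (ballS adj v t) => /andP [Hwt /orP [Hw | /existsP [p /andP [Hp Hpw]]]].
    by rewrite Hw in Hwt.
  have sub : N w \subset [set u | adj w u] :\ p.
    apply/subsetP => u; rewrite !inE => /andP [-> Hu]; rewrite andbT.
    by apply: contraNneq Hu => ->; exact: ball_le (leqnSn t) Hp.
  apply: leq_trans (subset_leq_card sub) _.
  have deg_w : #|[set u | adj w u]| <= D.
    by apply: leq_trans (deg_le w); apply/subset_leq_card/subsetP => u; rewrite inE.
  by rewrite (cardsD1 p) inE sym Hpw in deg_w; lia.
apply: leq_trans (subset_leq_card cover) _; rewrite -sum_nat_const.
elim/big_rec2: _ => [|w m U /card_N le_N le_U]; first by rewrite cards0.
exact: leq_trans (leq_card_setU _ _) (leq_add le_N le_U).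
Qed.

Lemma card_sphere t : #|sphere adj v t| <= D * maxn 1 D.-1 ^ t.
Proof.
elim: t => [|t IH]; first by rewrite muln1 card_sphere0.
apply: leq_trans (card_sphereS t) _.
by rewrite expnS mulnCA [X in _ <= X]mulnC leq_mul // leq_maxr.
Qed.

Lemma card_ball t : #|[set u | ball adj v t u]| <= ball_card_bound D t.
Proof.
rewrite /ball_card_bound; elim: t => [|t IH].
  rewrite addn0 -(cards1 v); apply/subset_leq_card/subsetP => u.
  by rewrite in_B ball0 inE.
have sub : B t.+1 \subset B t :|: sphere adj v t.
  by apply/subsetP => u; rewrite in_setU in_sphere !in_B; case: (ball adj v t u).
apply: leq_trans (subset_leq_card sub) _; apply: leq_trans (leq_card_setU _ _) _.
have mono : D * maxn 1 D.-1 ^ t <= D * maxn 1 D.-1 ^ t.+1.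
  by rewrite leq_mul2l leq_pexp2l ?leq_maxl ?orbT.
rewrite mulSn addnCA [X in _ <= X]addnC leq_add //; last exact: leq_trans (card_sphere t) mono.
by apply: leq_trans IH _; rewrite leq_add2l leq_mul.
Qed.

End BallSize.

Lemma grow_set n (P : {set 'I_n} -> Prop) (A : {set 'I_n}) k :
  (forall W : {set 'I_n}, P W -> #|W| < n -> exists2 y, y \notin W & P (y |: W)) ->
  P A -> #|A| <= k <= n -> exists W : {set 'I_n}, [/\ A \subset W, #|W| = k & P W].
Proof.
move=> step PA /andP [le_Ak le_kn]; rewrite -(subnK le_Ak) in le_kn *.
elim: (k - #|A|) le_kn => [|m IH] le_n; first by exists A.
have [W [sAW cardW PW]] := IH (ltnW le_n).
have [y yW PyW] : exists2 y, y \notin W & P (y |: W) by apply: step; rewrite ?cardW.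
exists (y |: W); split=> //; first exact: subset_trans sAW (subsetUr _ _).
by rewrite cardsU1 yW cardW.
Qed.

Lemma exists_notin n (W : {set 'I_n}) : #|W| < n -> exists y, y \notin W.
Proof.
move=> small; apply/existsP; apply: contraTT small => /existsPn allW.
rewrite -leqNgt -{1}(card_ord n); apply/subset_leq_card/subsetP => y _.
by have := allW y; rewrite negbK.
Qed.

Lemma path_exit n (adj : rel 'I_n) (W : {set 'I_n}) x p :
  x \in W -> path adj x p -> last x p \notin W -> exists z y, [/\ z \in W, y \notin W & adj z y].
Proof.
elim: p x => [|y p IH] x xW /=; first by rewrite xW.
case/andP=> Hxy Hp; case: (boolP (y \in W)) => [yW | yW _]; first exact: IH.
by exists x, y.
Qed.

Definition rel_on n (adj : rel 'I_n) (W : {set 'I_n}) : rel 'I_n :=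
  fun a b => [&& a \in W, b \in W & adj a b].

Definition connected_within n (adj : rel 'I_n) (W : {set 'I_n}) (v : 'I_n) : Prop :=
  forall x, x \in W -> connect (rel_on adj W) x v.

Section Growth.
Variables (n : nat) (adj : rel 'I_n) (v : 'I_n).
Hypothesis sym : symmetric adj.

Lemma connected_within_ball K : connected_within adj [set u | ball adj v K u] v.
Proof.
pose BK := [set u | ball adj v K u].
suff reach t u : t <= K -> ball adj v t u -> connect (rel_on adj BK) u v.
  by move=> x; rewrite inE; apply: reach.
elim: t u => [|t IH] u le_K; first by rewrite ball0 => /eqP ->.
rewrite ballS => /orP [/IH -> //| /existsP [w /andP [Hw Hwu]]]; first lia.
apply: connect_trans (IH w (ltnW le_K) Hw); apply: connect1.
rewrite /rel_on !inE sym Hwu andbT; apply/andP; split.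
  by apply: ball_le le_K (ball_step Hw Hwu).
by apply: ball_le (ltnW le_K) Hw.
Qed.

Lemma connected_within_grow (W : {set 'I_n}) :
  connected adj -> v \in W -> connected_within adj W v -> #|W| < n ->
  exists2 y, y \notin W & connected_within adj (y |: W) v.
Proof.
move=> conn vW connW small; have [y0 y0W] := exists_notin small.
have [p Hp Hlast] := connectP (conn v y0).
have [z [y [zW yW Hzy]]] : exists z y, [/\ z \in W, y \notin W & adj z y].
  by apply: path_exit vW Hp _; rewrite -Hlast.
have sub : subrel (rel_on adj W) (connect (rel_on adj (y |: W))).
  by move=> a b /and3P [aW bW Hab]; apply: connect1; rewrite /rel_on !inE aW bW Hab !orbT.
exists y => // x; rewrite in_setU1 => /orP [/eqP -> | xW].
  apply: connect_trans (connect_sub sub (connW z zW)); apply: connect1.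
  by rewrite /rel_on !inE eqxx zW orbT sym Hzy.
exact: (connect_sub sub (connW x xW)).
Qed.

End Growth.

Lemma connect_homo (T T' : finType) (e : rel T) (e' : rel T') (h : T -> T') :
  {homo h : x y / e x y >-> e' x y} -> {homo h : x y / connect e x y >-> connect e' x y}.
Proof.
move=> hom x y /connectP [p Hp ->]; apply/connectP; exists (map h p); last by rewrite last_map.
by elim: p x Hp => //= z p IH x /andP [Hxz Hp]; rewrite hom ?IH.
Qed.

Section Induced.
Variables (n : nat) (adj : rel 'I_n) (W : {set 'I_n}) (n0 : nat) (v : 'I_n).
Hypotheses (card_W : #|W| = n0) (vW : v \in W).

Definition ind_val (i : 'I_n0) : 'I_n := enum_val (cast_ord (esym card_W) i).
Definition ind_rank (x : 'I_n) : 'I_n0 := cast_ord card_W (enum_rank_in vW x).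
Definition ind_adj : rel 'I_n0 := fun i j => adj (ind_val i) (ind_val j).

Lemma ind_val_inj : injective ind_val.
Proof. by move=> i j /enum_val_inj /cast_ord_inj. Qed.

Lemma ind_rankK x : x \in W -> ind_val (ind_rank x) = x.
Proof. by move=> xW; rewrite /ind_val /ind_rank cast_ordK enum_rankK_in. Qed.

Lemma ind_valK : cancel ind_val ind_rank.
Proof. by move=> i; rewrite /ind_val /ind_rank enum_valK_in cast_ordKV. Qed.

Lemma ind_adj_simple : simple_graph adj -> simple_graph ind_adj.
Proof. by case=> sym irr; split=> [i j | i]; [exact: sym | exact: irr]. Qed.

Lemma ind_adj_deg D : max_deg_le D adj -> max_deg_le D ind_adj.
Proof.
move=> deg_le i; apply: leq_trans (deg_le (ind_val i)); rewrite /deg.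
rewrite -(card_image ind_val_inj); apply/subset_leq_card/subsetP => u /imageP [j Hj ->].
exact: Hj.
Qed.

Lemma ind_adj_acyclic : acyclic adj -> acyclic ind_adj.
Proof.
move=> acyc s size_s uniq_s; have := acyc (map ind_val s).
by rewrite size_map (map_inj_uniq ind_val_inj) cycle_map; apply.
Qed.

Lemma ind_adj_connected : symmetric adj -> connected_within adj W v -> connected ind_adj.
Proof.
move=> sym connW.
have to_v i : connect ind_adj i (ind_rank v).
  rewrite -{1}(ind_valK i); apply: connect_homo (connW _ (enum_valP _)) => a b /and3P [aW bW].
  by rewrite /ind_adj !ind_rankK.
move=> i j; apply: connect_trans (to_v i) _.
by rewrite sym_connect_sym; [exact: to_v | move=> a b; rewrite /ind_adj sym].
Qed.

Lemma ind_local_iso K :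
  [set u | ball adj v K u] \subset W -> local_iso K adj v ind_adj (ind_rank v) ind_rank ind_val.
Proof.
move=> sub; have inW u : ball adj v K u -> u \in W by move=> Hu; apply: (subsetP sub); rewrite inE.
apply: local_iso_intro => [u u' Hu Hu' | w w' _ _ // | u Hu | w _].
- by rewrite /ind_adj !ind_rankK ?inW.
- by rewrite ind_rankK ?inW.
- exact: ind_valK.
Qed.

End Induced.

Section SubgraphEmbedding.
Variables (D n n0 K : nat) (adj : rel 'I_n) (v : 'I_n).
Hypotheses (sym : symmetric adj) (deg_le : max_deg_le D adj).
Hypothesis n0_bounds : ball_card_bound D K <= n0 <= n.

Lemma ball_hull (P : {set 'I_n} -> Prop) :
  (forall W : {set 'I_n}, P W -> #|W| < n -> exists2 y, y \notin W & P (y |: W)) ->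
  P [set u | ball adj v K u] ->
  exists W : {set 'I_n}, [/\ [set u | ball adj v K u] \subset W, #|W| = n0 & P W].
Proof.
move=> step PB; apply: grow_set step PB _; case/andP: n0_bounds => bound ->.
by rewrite andbT; apply: leq_trans (card_ball v sym deg_le K) bound.
Qed.

Lemma bounded_degree_embedding :
  graph_class BoundedDegree D adj ->
  exists (adjH : rel 'I_n0) f g,
    graph_class BoundedDegree D adjH /\ local_iso K adj v adjH (f v) f g.
Proof.
case=> simple _.
have step (W : {set 'I_n}) : True -> #|W| < n -> exists2 y, y \notin W & True.
  by move=> _ /exists_notin [y yW]; exists y.
have [W [sub cardW _]] := ball_hull step I.
have vW : v \in W by apply: (subsetP sub); rewrite inE ball_refl.
exists (ind_adj adj cardW), (ind_rank cardW vW), (ind_val cardW).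
split; last exact: (ind_local_iso cardW vW sub).
by split; [exact: (ind_adj_simple cardW simple) | exact: (ind_adj_deg cardW deg_le)].
Qed.

Lemma tree_embedding :
  graph_class BoundedDegreeTrees D adj ->
  exists (adjH : rel 'I_n0) f g,
    graph_class BoundedDegreeTrees D adjH /\ local_iso K adj v adjH (f v) f g.
Proof.
case=> simple [_ [conn acyc]].
pose P (W : {set 'I_n}) := v \in W /\ connected_within adj W v.
have step (W : {set 'I_n}) : P W -> #|W| < n -> exists2 y, y \notin W & P (y |: W).
  move=> [vW connW] small; have [y yW connyW] := connected_within_grow sym conn vW connW small.
  by exists y => //; split; rewrite // in_setU1 vW orbT.
have base : P [set u | ball adj v K u].
  by split; [rewrite inE ball_refl | exact: connected_within_ball].
have [W [sub cardW [vW connW]]] := ball_hull step base.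
exists (ind_adj adj cardW), (ind_rank cardW vW), (ind_val cardW).
split; last exact: (ind_local_iso cardW vW sub).
split; first exact: (ind_adj_simple cardW simple).
split; first exact: (ind_adj_deg cardW deg_le).
by split; [exact: (ind_adj_connected cardW vW sym connW) | exact: (ind_adj_acyclic cardW acyc)].
Qed.

End SubgraphEmbedding.

Definition std_cycle_nat (m a b : nat) : bool :=
  [|| a.+1 == b, b.+1 == a, (a == 0) && (b.+1 == m) | (b == 0) && (a.+1 == m)].

Definition std_cycle m : rel 'I_m := fun i j => std_cycle_nat m i j.
Arguments std_cycle : clear implicits.

Section StdCycle.
Variable m' : nat.
Local Notation m := m'.+1.

Lemma ball_std_cycle t (i : 'I_m) : ball (std_cycle m) ord0 t i = (i <= t) || (m <= i + t).
Proof.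
elim: t i => [|t IH] i; have Hi := ltn_ord i; first by rewrite ball0 -val_eqE /=; lia.
rewrite ballS IH; apply/idP/idP.
  case/orP=> [| /existsP [j /andP [Hj Hji]]]; first lia.
  by move: Hj Hji; rewrite IH /std_cycle /std_cycle_nat; have := ltn_ord j; lia.
move=> near; apply/orP; case: (boolP ((i <= t) || (m <= i + t))) => [? | far]; [by left | right].
apply/existsP.
have [i_t | i_far] := eqVneq (i : nat) t.+1.
  by exists (inord t); rewrite IH /std_cycle /std_cycle_nat inordK; lia.
have [i_m | i_last] := boolP (i.+1 < m).
  by exists (inord i.+1); rewrite IH /std_cycle /std_cycle_nat inordK; lia.
by exists ord0; rewrite IH /std_cycle /std_cycle_nat /=; lia.
Qed.

Hypothesis m_ge3 : 3 <= m.

Lemma std_cycle_sym : symmetric (std_cycle m).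
Proof. by move=> i j; rewrite /std_cycle /std_cycle_nat; lia. Qed.

Lemma std_cycle_irr : irreflexive (std_cycle m).
Proof. by move=> i; rewrite /std_cycle /std_cycle_nat; have := ltn_ord i; lia. Qed.

Lemma std_cycle_deg i : deg (std_cycle m) i = 2.
Proof.
have Hi := ltn_ord i.
pose a : 'I_m := inord (if i.+1 == m then 0 else i.+1).
pose b : 'I_m := inord (if i == 0 :> nat then m.-1 else i.-1).
have val_a : a = (if i.+1 == m then 0 else i.+1) :> nat by rewrite inordK //; case: ifP; lia.
have val_b : b = (if i == 0 :> nat then m.-1 else i.-1) :> nat by rewrite inordK //; case: ifP; lia.
rewrite /deg (eq_card (B := pred2 a b)) => [|j]; last first.
  rewrite !inE /std_cycle /std_cycle_nat -!val_eqE /= val_a val_b; have := ltn_ord j.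
  by case: ifP; case: ifP; lia.
by rewrite card2 -val_eqE /= val_a val_b; case: ifP; case: ifP; lia.
Qed.

Lemma std_cycle_connected : connected (std_cycle m).
Proof.
have to0 (i : 'I_m) : connect (std_cycle m) i ord0.
  case: i => k; elim: k => [|k IH] lt_km; first exact: eq_connect0 (val_inj _).
  apply: connect_trans (IH (ltnW lt_km)); apply: connect1.
  by rewrite /std_cycle /std_cycle_nat /= eqxx orbT.
move=> i j; apply: connect_trans (to0 i) _.
by rewrite (sym_connect_sym std_cycle_sym).
Qed.

Lemma std_cycle_class : graph_class Cycles 2 (std_cycle m).
Proof.
split; first by split; [exact: std_cycle_sym | exact: std_cycle_irr].
by split=> //; split; [exact: std_cycle_connected | exact: std_cycle_deg].
Qed.

End StdCycle.

(* Fixes the arc 0..K and sends the last K vertices of the m-cycle to the last K of the m0-cycle. *)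
Definition arc_map m' m0' K (i : 'I_m'.+1) : 'I_m0'.+1 :=
  inord (if i <= K then i : nat else m0'.+1 - (m'.+1 - i)).

Section ArcMap.
Variables (m' m0' K : nat).
Local Notation m := m'.+1.
Local Notation m0 := m0'.+1.
Hypotheses (m_large : 2 * K + 2 <= m) (m0_large : 2 * K + 2 <= m0).

Lemma arc_map_val (i : 'I_m) : ball (std_cycle m) ord0 K i ->
  arc_map m0' K i = (if i <= K then i : nat else m0 - (m - i)) :> nat.
Proof. by rewrite ball_std_cycle => Hi; rewrite inordK //; have := ltn_ord i; case: ifP; lia. Qed.

Lemma arc_map_adj (i j : 'I_m) : ball (std_cycle m) ord0 K i -> ball (std_cycle m) ord0 K j ->
  std_cycle m i j -> std_cycle m0 (arc_map m0' K i) (arc_map m0' K j).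
Proof.
move=> Hi Hj; rewrite /std_cycle /std_cycle_nat !arc_map_val //.
move: Hi Hj; rewrite !ball_std_cycle; have := ltn_ord i; have := ltn_ord j.
by case: ifP; case: ifP; lia.
Qed.

Lemma arc_mapK (i : 'I_m) : ball (std_cycle m) ord0 K i -> arc_map m' K (arc_map m0' K i) = i.
Proof.
move=> Hi; have val_fi := arc_map_val Hi; rewrite ball_std_cycle in Hi.
apply: ord_inj; rewrite [nat_of_ord (arc_map m' K _)]inordK val_fi;
  by have := ltn_ord i; case: ifP; case: ifP; lia.
Qed.

End ArcMap.

Lemma std_cycle_local_iso m' m0' K : 2 * K + 2 <= m'.+1 -> 2 * K + 2 <= m0'.+1 ->
  local_iso K (std_cycle m'.+1) ord0 (std_cycle m0'.+1) ord0 (arc_map m0' K) (arc_map m' K).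
Proof.
move=> m_large m0_large.
have f0 : arc_map m0' K (@ord0 m') = ord0 by apply: ord_inj; rewrite inordK /=; lia.
rewrite -[X in local_iso _ _ _ _ X]f0; apply: local_iso_intro; rewrite ?f0.
- exact: arc_map_adj.
- exact: arc_map_adj.
- exact: arc_mapK.
- exact: arc_mapK.
Qed.

Section CycleStructure.
Variables (n : nat) (adj : rel 'I_n).
Hypotheses (sym : symmetric adj) (irr : irreflexive adj) (conn : connected adj).
Hypotheses (deg2 : forall x, deg adj x = 2) (n_ge3 : 3 <= n).

Lemma other_neighbour_exists x y : adj y x -> exists z, adj y z && (z != x).
Proof.
move=> Hyx; apply/existsP; apply: contraT => /existsPn none.
have : #|[pred z | adj y z]| <= #|pred1 x|.
  apply/subset_leq_card/subsetP => z; rewrite !inE => Hz.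
  by apply: contraT => zx; have := none z; rewrite Hz zx.
by rewrite card1 -/(deg adj y) deg2.
Qed.

Lemma neighbours_two y a b z :
  adj y a -> adj y b -> a != b -> adj y z -> (z == a) || (z == b).
Proof.
move=> Ha Hb ab Hz; apply: contraT => za_zb.
have : #|z |: [set a; b]| <= #|[pred u | adj y u]|.
  by apply/subset_leq_card/subsetP => u; rewrite !inE => /or3P [] /eqP ->.
by rewrite -/(deg adj y) deg2 cardsU1 cards2 ab !inE; move: za_zb; case: (z == a); case: (z == b).
Qed.

Variables (v u1 : 'I_n).
Hypothesis vu1 : adj v u1.

Definition other (x y : 'I_n) : 'I_n := odflt x [pick z | adj y z && (z != x)].

Lemma other_spec x y : adj y x -> adj y (other x y) && (other x y != x).
Proof.
rewrite /other => Hyx; case: pickP => [z -> //| none] /=.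
by have [z Hz] := other_neighbour_exists Hyx; rewrite none in Hz.
Qed.

(* The walk along the cycle that starts with the edge v u1 and never turns back. *)
Definition walk i : 'I_n := (iter i (fun p => (p.2, other p.1 p.2)) (v, u1)).1.

Lemma walk0 : walk 0 = v. Proof. by []. Qed.
Lemma walkSS i : walk i.+2 = other (walk i) (walk i.+1). Proof. by []. Qed.

Lemma walk_adj i : adj (walk i) (walk i.+1).
Proof.
elim: i => [//|i IH]; rewrite walkSS.
by case/andP: (other_spec (etrans (sym _ _) IH)).
Qed.

Lemma walk_adj' i : adj (walk i.+1) (walk i).
Proof. by rewrite sym walk_adj. Qed.

Lemma walk_turn i : walk i != walk i.+2.
Proof. by rewrite walkSS eq_sym; case/andP: (other_spec (walk_adj' i)). Qed.

Definition walk_inj_on j := forall i1 i2, i1 < j -> i2 < j -> walk i1 = walk i2 -> i1 = i2.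

Lemma walk_first_repeat j i : walk_inj_on j -> i < j -> walk j = walk i -> i = 0.
Proof.
move=> inj; case: i => [//|i] lt_ij same.
have [lt_j | ge_j] := ltnP i.+2 j; last first.
  have j_i2 : j = i.+2 by apply/eqP; rewrite eqn_leq ge_j.
  by move: (walk_adj i.+1); rewrite -j_i2 same irr.
case: j inj same lt_ij lt_j => [//|j] inj same _ lt_j.
have := walk_adj j; rewrite same sym.
move=> /(neighbours_two (walk_adj' i) (walk_adj i.+1) (walk_turn i)).
case/orP=> /eqP /inj => eq_j; first by have := eq_j (ltnSn j) (ltnW (ltnW lt_j)); lia.
have j_i2 : j = i.+2 by apply: eq_j; lia.
by move: same (walk_turn i.+1); rewrite j_i2 => ->; rewrite eqxx.
Qed.

Lemma walk_return_late j : walk_inj_on j -> walk j = v -> 0 < j -> n <= j.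
Proof.
move=> inj back j_pos.
have j_ge2 : 1 < j by case: j inj back j_pos => [|[|j]] // _ back _; move: vu1; rewrite -back irr.
pose W := [set walk k | k : 'I_j].
have inW k : k < j -> walk k \in W by move=> lt_kj; apply/imsetP; exists (Ordinal lt_kj).
have closedW k y : k < j -> adj (walk k) y -> y \in W.
  case: k => [|k] lt_kj Hy.
    have last_adj : adj (walk 0) (walk j.-1) by rewrite walk0 -back sym -{2}(prednK j_pos) walk_adj.
    have first_last : walk 1 != walk j.-1.
      have [j2 | j_ne2] := eqVneq j 2; first by move: (walk_turn 0); rewrite -j2 back walk0 eqxx.
      by apply/eqP => /inj; lia.
    case/orP: (neighbours_two (walk_adj 0) last_adj first_last Hy) => /eqP ->;
      by apply: (inW _); lia.
  case/orP: (neighbours_two (walk_adj' k) (walk_adj k.+1) (walk_turn k) Hy) => /eqP ->.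
    by apply: (inW _); lia.
  have [lt_k2j | ge_k2j] := ltnP k.+2 j; first exact: (inW _ lt_k2j).
  have -> : k.+2 = j by lia.
  by rewrite back -walk0; apply: (inW _).
have allW y : y \in W.
  apply: contraT => yW; have [p Hp Hy] := connectP (conn v y).
  have [z [y' [zW y'W Hzy']]] : exists z y', [/\ z \in W, y' \notin W & adj z y'].
    by apply: path_exit Hp _; rewrite -?Hy // -walk0 (inW 0).
  by case/imsetP: zW Hzy' => k _ -> /(closedW _ _ (ltn_ord k)); rewrite (negPf y'W).
have : #|W| <= j by apply: leq_trans (leq_imset_card _ _) _; rewrite card_ord.
by rewrite (_ : W = setT) ?cardsT ?card_ord //; apply/setP => y; rewrite allW inE.
Qed.

Lemma walk_inj : walk_inj_on n.
Proof.
suff inj_on j : j <= n -> walk_inj_on j by exact: inj_on.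
elim: j => [_ ? ? //| j IH] lt_jn; have inj := IH (ltnW lt_jn).
have fresh i : i < j -> walk j != walk i.
  move=> lt_ij; apply/eqP => same; move: (same); rewrite (walk_first_repeat inj lt_ij same) => back.
  by have := walk_return_late inj back (leq_ltn_trans (leq0n i) lt_ij); lia.
move=> i1 i2 lt1 lt2 same.
case: (ltngtP i1 j) => Hi1; case: (ltngtP i2 j) => Hi2; try lia.
- exact: inj.
- by move: (fresh i1 Hi1); rewrite same Hi2 eqxx.
- by move: (fresh i2 Hi2); rewrite -same Hi1 eqxx.
Qed.

Lemma walk_period : walk n = v.
Proof.
have walk_ord_inj : injective (fun i : 'I_n => walk i).
  by move=> i j /(walk_inj (ltn_ord i) (ltn_ord j)) /ord_inj.
have [pre _ preK] := injF_bij walk_ord_inj.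
have back := preK (walk n).
by rewrite -back (walk_first_repeat walk_inj (ltn_ord _) (esym back)).
Qed.

Lemma walk_std_cycle (i j : 'I_n) : adj (walk i) (walk j) = std_cycle n i j.
Proof.
have lt_i := ltn_ord i; have lt_j := ltn_ord j.
pose a := if i.+1 == n then 0 else i.+1.
pose b := if i == 0 :> nat then n.-1 else i.-1.
have adj_a : adj (walk i) (walk a).
  rewrite /a; case: eqP => [i_last | _]; last exact: walk_adj.
  by have := walk_adj i; rewrite i_last walk_period.
have adj_b : adj (walk i) (walk b).
  rewrite /b; case: eqP => [-> | i_pos]; last by rewrite -{1}(@prednK i) ?walk_adj'; lia.
  by have := walk_adj n.-1; rewrite (prednK (ltnW (ltnW n_ge3))) walk_period sym.
have a_spec : (i.+1 == n) && (a == 0) || (i.+1 != n) && (a == i.+1).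
  by rewrite /a; case: eqP; rewrite ?eqxx.
have b_spec : (i == 0 :> nat) && (b == n.-1) || (i != 0 :> nat) && (b == i.-1).
  by rewrite /b; case: eqP; rewrite ?eqxx.
clearbody a b; have lt_a : a < n by lia.
have lt_b : b < n by lia.
have a_ne_b : walk a != walk b by apply/eqP => /(walk_inj lt_a lt_b); lia.
rewrite /std_cycle /std_cycle_nat; apply/idP/idP.
  move=> /(neighbours_two adj_a adj_b a_ne_b) /orP [] /eqP.
    by move/(walk_inj lt_j lt_a); lia.
  by move/(walk_inj lt_j lt_b); lia.
by move=> Hij; have [-> | ->] : j = a :> nat \/ j = b :> nat by lia.
Qed.

End CycleStructure.

Lemma cycle_embedding n n0 K (adj : rel 'I_n) (v : 'I_n) :
  graph_class Cycles 2 adj -> 3 <= n0 -> 2 * K + 2 <= n0 -> 2 * K + 2 <= n ->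
  exists (adjH : rel 'I_n0) f g,
    graph_class Cycles 2 adjH /\ local_iso K adj v adjH (f v) f g.
Proof.
case=> [[sym irr] [n_ge3 [conn deg2]]].
case: n0 => [//|n0'] n0_ge3 n0_large; case: n adj v sym irr n_ge3 conn deg2 => [//|n'] adj v.
move=> sym irr n_ge3 conn deg2 n_large.
have [u1 vu1] : exists u, adj v u by apply/card_gt0P; rewrite -/(deg adj v) deg2.
pose phi (i : 'I_n'.+1) := walk adj v u1 i.
have phi_inj : injective phi.
  by move=> i j /(walk_inj sym irr conn deg2 n_ge3 vu1 (ltn_ord i) (ltn_ord j)) /ord_inj.
have [psi phiK psiK] := injF_bij phi_inj.
have phi0 : phi ord0 = v by [].
have iso_std : local_iso K (std_cycle n'.+1) ord0 adj v phi psi.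
  by rewrite -phi0; apply: iso_local_iso => // i j; apply: walk_std_cycle.
have iso := local_iso_comp (local_iso_sym iso_std) (std_cycle_local_iso n_large n0_large).
exists (std_cycle n0'.+1), (arc_map n0' K \o psi), (phi \o arc_map n' K).
by split; [exact: std_cycle_class | have [->] := iso].
Qed.

Lemma ball_card_bound_small D K : D <= 2 -> ball_card_bound D K <= 2 * K + 1.
Proof.
move=> le_D2; rewrite /ball_card_bound (_ : maxn 1 D.-1 = 1) ?exp1n ?muln1; last by lia.
by rewrite addnC leq_add2r mulnC leq_mul2r le_D2 orbT.
Qed.

Lemma ball_card_bound_exp D K : 0 < D -> ball_card_bound D K <= 2 ^ ((D + 1) * (K + 1)).
Proof.
move=> D_pos.
have m_le : maxn 1 D.-1 ^ K <= D ^ K by case: K => [//|K]; rewrite leq_exp2r //; lia.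
set Y := 2 ^ (D * (K + 1)).
have X_le : D * maxn 1 D.-1 ^ K <= Y.
  apply: (@leq_trans (D ^ (K + 1))); first by rewrite addn1 expnS leq_mul2l m_le orbT.
  by rewrite /Y expnM leq_exp2r ?addn1 // ltnW // ltn_expl.
have K_le : K.+1 <= 2 ^ K by apply: ltn_expl.
have : K.+1 * Y <= 2 ^ K * Y by rewrite leq_mul2r K_le orbT.
rewrite -expnD /ball_card_bound mulSn => le_Y.
apply: leq_trans (_ : Y + K * Y <= _); last first.
  by apply: leq_trans le_Y _; rewrite leq_exp2l //; lia.
by rewrite leq_add ?leq_mul2l ?X_le ?orbT // /Y expn_gt0.
Qed.

Lemma large_enough_size D r (T : nat -> nat) : little_o T (dfun D) ->
  exists n0, [/\ 3 <= n0, 2 * (T n0 + 3 * r) + 2 <= n0 & ball_card_bound D (T n0 + 3 * r) <= n0].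
Proof.
(* For D <= 2 ask 4 T n0 <= n0; otherwise 2 (D + 1) T n0 <= log n0 and n0 >= 2 ^ E. *)
move=> small; have [le_D2 | gt_D2] := leqP D 2.
  have [N HN] := small 4 isT; pose n0 := maxn N (12 * r + 4).
  have := HN n0 (leq_maxl _ _); rewrite /dfun le_D2 => T_small.
  have n0_big : 12 * r + 4 <= n0 by apply: leq_maxr.
  exists n0; split; [lia | lia |].
  by apply: leq_trans (ball_card_bound_small _ le_D2) _; lia.
have [N HN] : exists N, forall n, N <= n -> 2 * (D + 1) * T n <= dfun D n by apply: small; lia.
pose E := 2 * (D + 1) * (3 * r + 1); pose n0 := maxn N (2 ^ E).
have not_le_D2 : (D <= 2) = false by rewrite leqNgt gt_D2.
have := HN n0 (leq_maxl _ _); rewrite /dfun not_le_D2 => T_small.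
have E_small : 2 ^ E <= n0 by apply: leq_maxr.
have E_log : E <= trunc_log 2 n0 by apply: trunc_log_max.
have K_log : (D + 1) * (T n0 + 3 * r + 1) <= trunc_log 2 n0 by rewrite /E in E_log; nia.
have K_exp : 2 ^ ((D + 1) * (T n0 + 3 * r + 1)) <= n0.
  apply: leq_trans (trunc_logP (isT : 1 < 2) _); first by rewrite leq_exp2l.
  by apply: leq_trans E_small; rewrite expn_gt0.
have K_lt := ltn_expl ((D + 1) * (T n0 + 3 * r + 1)) (isT : 1 < 2).
have E_lt := ltn_expl E (isT : 1 < 2).
exists n0; split; [rewrite /E in E_lt; nia | nia |].
by apply: leq_trans (ball_card_bound_exp _ _) K_exp; lia.
Qed.

Lemma graph_class_sym k D n (adj : rel 'I_n) : graph_class k D adj -> symmetric adj.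
Proof. by case: k => [[[]]|[[]]|[[]]]. Qed.

Lemma family_embedding k D n n0 K (adj : rel 'I_n) (v : 'I_n) :
  (k = Cycles -> D = 2) -> graph_class k D adj ->
  3 <= n0 -> 2 * K + 2 <= n0 -> ball_card_bound D K <= n0 -> n0 <= n ->
  exists (adjH : rel 'I_n0) f g, graph_class k D adjH /\ local_iso K adj v adjH (f v) f g.
Proof.
move=> cycles_D2 cls n0_ge3 n0_large n0_ball le_n0; have sym := graph_class_sym cls.
have bounds : ball_card_bound D K <= n0 <= n by rewrite n0_ball le_n0.
case: k cls cycles_D2 => cls cycles_D2.
- by apply: bounded_degree_embedding; rewrite //; case: cls.
- by apply: tree_embedding; rewrite //; case: cls => _ [].
- by rewrite (cycles_D2 erefl) in cls *; apply: cycle_embedding (leq_trans n0_large le_n0).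
Qed.

Theorem theorem8p1 (D : nat) (k : family_kind) (S G : finType)
    (Pi : problem S G) (T : nat -> nat) :
  (k = Cycles -> D = 2) ->
  is_LCL (graph_class k D) Pi ->
  little_o T (dfun D) ->
  mendable (graph_class k D) Pi T ->
  exists c : nat, mendable (graph_class k D) Pi (fun _ => c).
Proof.
move=> cycles_D2 _ small [r [psi [loc verif mendT]]].
have [n0 [n0_ge3 n0_large n0_ball]] := large_enough_size r small.
exists (\max_(i < n0.+1) T i), r, psi; split=> // n adj s l v cls acc.
have T_le m : m <= n0 -> T m <= \max_(i < n0.+1) T i.
  by rewrite -ltnS => lt_m; apply: (@leq_bigmax _ (fun i : 'I_n0.+1 => T i) (Ordinal lt_m)).
have [le_n | lt_n] := leqP n n0.
  have [mu mend] := mendT n adj s l v cls acc.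
  by exists mu; apply: is_mend_le mend; apply: T_le.
have [adjH [f [g [clsH iso]]]] :=
  family_embedding v cycles_D2 cls n0_ge3 n0_large n0_ball (ltnW lt_n).
have [mu mend] := mend_transfer loc cls clsH (graph_class_sym cls) iso acc
  (fun lH => mendT n0 adjH _ lH (f v) clsH).
by exists mu; apply: is_mend_le mend; apply: T_le.
Qed.
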